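(* If $G = K_4$ or $G$ is a diamond-necklace $N_k$ for some $k \ge 2$, then $\sigma_{(2,2)}(G) = \sigma_{(2,3)}(G)$.
   Context: A diamond is a graph isomorphic to $K_4$ minus one edge. Diamond-necklace: for $k\ge 2$, take $k$ disjoint diamonds $D_1,\dots,D_k$ with $V(D_i)=\{a_i,b_i,c_i,d_i\}$ where $a_ib_i$ is the missing edge, and add the edges $a_ib_{i+1}$ for $i\in\{1,\dots,k-1\}$ and the edge $a_kb_1$; the result is $N_k$. $(p,q)$-spreading: let $p\in\mathbb{N}$ and $q\in\mathbb{N}\cup\{\infty\}$. Start with a set $S\subseteq V(G)$ of blue vertices, all other vertices white. The color change rule: if a white vertex $w$ has at least $p$ blue neighbors, and at least one of the blue neighbors of $w$ has at most $q$ white neighbors, then $w$ is recolored blue. $S$ is a $(p,q)$-spreading set if repeatedly applying this rule eventually colors all vertices blue. $\sigma_{(p,q)}(G)$ is the minimum cardinality of a $(p,q)$-spreading set of $G$. *)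

From mathcomp Require Import all_boot.
From mathcomp Require Import boolp.
Set Implicit Arguments. Unset Strict Implicit. Unset Printing Implicit Defensive.

Definition simple_graph (T : finType) (e : rel T) : Prop := symmetric e /\ irreflexive e.

Section Spreading.
Variables (T : finType) (e : rel T) (p q : nat).

Definition pq_step (B : {set T}) : {set T} :=
  B :|: [set w | (w \notin B)
                 && (p <= #|[set u in B | e w u]|)
                 && [exists u in B, e w u && (#|[set x | e u x & x \notin B]| <= q)]].

Definition pq_spreading (S : {set T}) : Prop :=
  exists n, iter n pq_step S = [set: T].

End Spreading.

(* sigma_(p,q)(G): minimum cardinality of a (p,q)-spreading set.  The set of all
   vertices is always spreading (n = 0), so #|T| is a harmless default for minn. *)
Definition sigma_pq (T : finType) (e : rel T) (p q : nat) : nat :=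
  \big[minn/#|T|]_(S : {set T} | `[< pq_spreading e p q S >]) #|S|.

Definition K4_rel : rel 'I_4 := fun x y => x != y.

(* Diamond-necklace N_k on vertex set 'I_k * 'I_4: vertex (i, t) is a_i, b_i, c_i, d_i
   for t = 0, 1, 2, 3.  Diamond D_i = K_4 on {a_i,b_i,c_i,d_i} minus a_i b_i;
   plus edges a_i b_(i+1) (indices mod k, giving a_(k) b_1 in 1-based notation). *)
Definition necklace_rel (k : nat) : rel ('I_k * 'I_4) := fun x y =>
  let: (i, s) := x in let: (j, t) := y in
  [|| (i == j) && (s != t) && ~~ ((val s <= 1) && (val t <= 1)),
      (val s == 0) && (val t == 1) && (val j == (val i).+1 %% k)
    | (val s == 1) && (val t == 0) && (val i == (val j).+1 %% k)].
Arguments necklace_rel k : clear implicits.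

Lemma K4_simple : simple_graph K4_rel.
Proof. by split=> [x y|x]; rewrite /K4_rel ?eq_refl // eq_sym. Qed.

From mathcomp Require Import all_boot all_order boolp zify.
Set Implicit Arguments. Unset Strict Implicit. Unset Printing Implicit Defensive.
Import Order.TTheory.

(* Both graphs have maximum degree 3, and for every q >= 2 we show that
   sigma_(2,q) is 2 for K_4 and k + 1 for N_k.
   Lower bound: the potential |B| + #(edges leaving B) of the blue set B never
   increases when a vertex w with at least two blue neighbours turns blue (it
   changes by 1 + deg w - 2 #(blue neighbours of w) <= 0), and it strictly
   decreases when the last vertex turns blue, since all its neighbours are then
   blue.  It is at most 4|S| on the initial set S and equals |V| at the end, so
   |V| < 4|S|.
   Upper bound: when the maximum degree is 3, a white vertex with two blue
   neighbours, one of which has a second blue neighbour, turns blue for every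
   q >= 2.  Hence two vertices spread in K_4, and in N_k the vertices c_i
   together with b_1 spread diamond by diamond around the necklace. *)

Lemma pair_neq2 (T1 T2 : eqType) (x y : T1) (s t : T2) : s != t -> (x, s) != (y, t).
Proof. by move=> st; rewrite xpair_eqE negb_and st orbT. Qed.

Section Neighbourhoods.
Variables (T : finType) (e : rel T).

Definition nbhd v : {set T} := [set u | e v u].
Definition blue_nbhd (B : {set T}) v : {set T} := [set u in B | e v u].
Definition white_nbhd (B : {set T}) v : {set T} := [set u | e v u & u \notin B].

Lemma blue_nbhdS (B B' : {set T}) v :
  B \subset B' -> #|blue_nbhd B v| <= #|blue_nbhd B' v|.
Proof.
move=> sBB'; apply/subset_leq_card/subsetP => u.
by rewrite !inE => /andP[/(subsetP sBB') -> ->].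
Qed.

Lemma white_nbhd_sub (B : {set T}) v : white_nbhd B v \subset nbhd v.
Proof. by apply/subsetP => u; rewrite !inE => /andP[]. Qed.

End Neighbourhoods.

Lemma sigma_pq_le (T : finType) (e : rel T) p q (S : {set T}) :
  pq_spreading e p q S -> sigma_pq e p q <= #|S|.
Proof.
move=> spS; rewrite /sigma_pq -minEnat.
exact: (bigmin_le_cond _ (fun S : {set T} => #|S|) (asboolT spS)).
Qed.

Section Potential.
Variables (T : finType) (e : rel T) (p : nat).
Hypotheses (e_sym : symmetric e) (e_irr : irreflexive e).
Hypothesis nbhd_lt : forall v, #|nbhd e v| < 2 * p.

Definition potential (B : {set T}) : nat := \sum_(v in B) (1 + #|white_nbhd e B v|).

Definition activated (B : {set T}) w := (w \notin B) && (p <= #|blue_nbhd e B w|).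

Lemma sum_adj (X : {set T}) w : \sum_(v in X) (e v w : nat) = #|blue_nbhd e X w|.
Proof.
rewrite -sum1_card [RHS](eq_bigl (fun u => (u \in X) && e w u)); last first.
  by move=> u; rewrite !inE.
by rewrite big_mkcondr; apply: eq_bigr => v _; rewrite e_sym; case: (e w v).
Qed.

Lemma potential_setU1 (X : {set T}) w : w \notin X ->
  potential (w |: X) + 2 * #|blue_nbhd e X w| = potential X + 1 + #|nbhd e w|.
Proof.
move=> wX; rewrite /potential big_setU1 //=.
have white_split v : v \in X ->
    1 + #|white_nbhd e X v| = (e v w : nat) + (1 + #|white_nbhd e (w |: X) v|).
  move=> vX; rewrite (cardsD1 w (white_nbhd e X v)) !inE (negbTE wX) andbT.
  have -> : white_nbhd e X v :\ w = white_nbhd e (w |: X) v.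
    by apply/setP => u; rewrite !inE negb_or; case: (u == w); case: (e v u).
  lia.
have nbhd_split : #|white_nbhd e (w |: X) w| + #|blue_nbhd e X w| = #|nbhd e w|.
  rewrite -(cardsID X (nbhd e w)) addnC; congr (_ + _).
    by apply: eq_card => u; rewrite !inE andbC.
  apply: eq_card => u; rewrite !inE negb_or.
  by case: (eqVneq u w) => [->|_] /=; rewrite ?e_irr ?andbF // andbC.
rewrite [in RHS](eq_bigr _ white_split) [in RHS]big_split /= sum_adj; lia.
Qed.

Lemma potential_setU1_le (X : {set T}) w : w \notin X -> p <= #|blue_nbhd e X w| ->
  potential (w |: X) <= potential X.
Proof. by move=> wX; have := potential_setU1 wX; have := nbhd_lt w; lia. Qed.

Lemma potential_setU1_lt (X : {set T}) w : 1 < p -> w \notin X ->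
  p <= #|blue_nbhd e X w| -> nbhd e w \subset X -> potential (w |: X) < potential X.
Proof.
move=> p_gt1 wX blue_ge nbhd_sub.
have blue_all : blue_nbhd e X w = nbhd e w.
  apply/setP => u; rewrite !inE andb_idl // => ewu.
  by apply: (subsetP nbhd_sub); rewrite inE.
by have := potential_setU1 wX; move: blue_ge; rewrite blue_all; lia.
Qed.

Lemma potential_setU_le (B M : {set T}) :
  {subset M <= activated B} -> potential (B :|: M) <= potential B.
Proof.
have [n] := ubnP #|M|; elim: n M => // n IHn M; rewrite ltnS => leMn actM.
have [->|[w wM]] := set_0Vmem M; first by rewrite setU0.
have /andP[wB blue_ge] := actM w wM.
have wX : w \notin B :|: M :\ w by rewrite !inE eqxx negb_or wB.
rewrite -(setD1K wM) setUCA; apply: leq_trans (potential_setU1_le wX _) _.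
  exact: leq_trans blue_ge (blue_nbhdS e w (subsetUl _ _)).
apply: IHn => [|x /setD1P[_ /actM] //].
by move: leMn; rewrite (cardsD1 w M) wM.
Qed.

Lemma potential_setU_lt (B M : {set T}) : 1 < p -> {subset M <= activated B} ->
  B != setT -> B :|: M = setT -> potential setT < potential B.
Proof.
move=> p_gt1 actM BT BMT.
have [M0|[w wM]] := set_0Vmem M; first by move: BT; rewrite -BMT M0 setU0 eqxx.
have /andP[wB blue_ge] := actM w wM.
have wX : w \notin B :|: M :\ w by rewrite !inE eqxx negb_or wB.
have BMwT : w |: (B :|: M :\ w) = setT by rewrite setUCA setD1K.
rewrite -{1}BMwT; apply: leq_trans (potential_setU1_lt p_gt1 wX _ _) _.
- exact: leq_trans blue_ge (blue_nbhdS e w (subsetUl _ _)).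
- apply/subsetP => u wu; have : u \in w |: (B :|: M :\ w) by rewrite BMwT inE.
  by rewrite in_setU1 => /predU1P[uw|//]; move: wu; rewrite uw inE e_irr.
by apply: potential_setU_le => x /setD1P[_ /actM].
Qed.

Lemma pq_step_activated q (B : {set T}) :
  exists2 M, pq_step e p q B = B :|: M & {subset M <= activated B}.
Proof. by eexists => // w; rewrite inE => /andP[]. Qed.

Lemma potential_iter_le q (S : {set T}) n :
  potential (iter n (pq_step e p q) S) <= potential S.
Proof.
elim: n => //= n IHn; apply: leq_trans IHn.
have [M -> actM] := pq_step_activated q (iter n (pq_step e p q) S).
exact: potential_setU_le.
Qed.

Lemma potential_setT : potential setT = #|T|.
Proof.
rewrite /potential -cardsT -sum1_card; apply: eq_bigr => v _.
suff -> : white_nbhd e setT v = set0 by rewrite cards0.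
by apply/setP => u; rewrite !inE andbF.
Qed.

Lemma potential_ub (S : {set T}) : potential S <= 2 * p * #|S|.
Proof.
rewrite /potential mulnC -sum_nat_const; apply: leq_sum => v _.
by have := subset_leq_card (white_nbhd_sub e S v); have := nbhd_lt v; lia.
Qed.

Lemma spreading_card_gt q (S : {set T}) : 1 < p -> 0 < #|T| ->
  pq_spreading e p q S -> #|T| < 2 * p * #|S|.
Proof.
move=> p_gt1 T_gt0 [n iterT]; have [->|ST] := eqVneq S setT.
  by rewrite cardsT; nia.
suff : potential setT < potential S.
  by rewrite potential_setT => lt_TS; apply: leq_trans lt_TS (potential_ub S).
elim: n iterT => [/= S_T|n IHn iterT]; first by rewrite S_T eqxx in ST.
have [iter_nT|iter_nT] := eqVneq (iter n (pq_step e p q) S) setT; first exact: IHn.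
apply: leq_trans (potential_iter_le q S n).
have [M stepE actM] := pq_step_activated q (iter n (pq_step e p q) S).
by apply: (potential_setU_lt p_gt1 actM iter_nT); rewrite -stepE.
Qed.

Lemma card_lt_sigma_pq q : 1 < p -> 0 < #|T| -> #|T| < 2 * p * sigma_pq e p q.
Proof.
move=> p_gt1 T_gt0; rewrite /sigma_pq; elim/big_ind: _ => [|x y|S /asboolP].
- by nia.
- by move=> ltx lty; rewrite /minn; case: ifP.
- exact: spreading_card_gt.
Qed.

End Potential.

Section Subcubic.
Variables (T : finType) (e : rel T) (q : nat).
Hypothesis nbhd_le3 : forall v, #|nbhd e v| <= 3.
Hypothesis q_ge2 : 2 <= q.

Definition spreads_to (S B : {set T}) := exists n, B \subset iter n (pq_step e 2 q) S.

Lemma spreads_to_refl (S : {set T}) : spreads_to S S.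
Proof. by exists 0. Qed.

Lemma spreads_toS (S B B' : {set T}) :
  B' \subset B -> spreads_to S B -> spreads_to S B'.
Proof. by move=> sB'B [n sBX]; exists n; apply: subset_trans sBX. Qed.

Lemma spreads_to_setT (S : {set T}) : spreads_to S setT -> pq_spreading e 2 q S.
Proof. by move=> [n sTX]; exists n; apply/eqP; rewrite eqEsubset subsetT. Qed.

(* [y] has the blue neighbour [z] besides [w], hence at most two white ones. *)
Lemma spreads_to_setU1 (S B : {set T}) w y y' z :
  y \in B -> y' \in B -> y != y' -> e w y -> e w y' -> z \in B -> e y z ->
  spreads_to S B -> spreads_to S (w |: B).
Proof.
move=> yB y'B yy' ewy ewy' zB eyz [n sBX]; exists n.+1; rewrite iterS.
set X := iter n _ S in sBX *.
rewrite /pq_step subUset (subset_trans sBX (subsetUl _ _)) andbT.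
rewrite sub1set !inE; case: (boolP (w \in X)) => //= wX.
have [yX y'X zX] := And3 (subsetP sBX y yB) (subsetP sBX y' y'B) (subsetP sBX z zB).
apply/andP; split.
  apply: (@leq_trans #|[set y; y']|); first by rewrite cards2 yy'.
  apply/subset_leq_card/subsetP => u.
  by rewrite !inE => /orP[]/eqP->; rewrite ?yX ?y'X.
apply/existsP; exists y; rewrite yX ewy /=.
have white_sub : [set x | e y x & x \notin X] \subset nbhd e y :\ z.
  apply/subsetP => u; rewrite !inE => /andP[-> uX]; rewrite andbT.
  by apply: contraNneq uX => ->.
apply: leq_trans (subset_leq_card white_sub) _.
have := nbhd_le3 y; rewrite (cardsD1 z) inE eyz add1n ltnS => nbhd_le2.
exact: leq_trans nbhd_le2 q_ge2.
Qed.

End Subcubic.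

Lemma nbhd_K4 (v : 'I_4) : nbhd K4_rel v = [set~ v].
Proof. by apply/setP => u; rewrite !inE /K4_rel eq_sym. Qed.

Lemma sigma_K4 q : 2 <= q -> sigma_pq K4_rel 2 q = 2.
Proof.
move=> q_ge2; have [K4_sym K4_irr] := K4_simple.
have nbhd_le3 v : #|nbhd K4_rel v| <= 3 by rewrite nbhd_K4 cardsC1 card_ord.
apply/eqP; rewrite eqn_leq; apply/andP; split.
  pose a := @Ordinal 4 0 isT; pose b := @Ordinal 4 1 isT.
  pose c := @Ordinal 4 2 isT; pose d := @Ordinal 4 3 isT.
  apply: leq_trans (sigma_pq_le (S := [set a; b]) _) _; last by rewrite cards2.
  apply: spreads_to_setT; apply: (spreads_toS (B := c |: (d |: [set a; b]))).
    by apply/subsetP => -[[|[|[|[|t]]]] ?] //= _; rewrite !inE.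
  do 2 (apply: (spreads_to_setU1 nbhd_le3 q_ge2 (y := a) (y' := b) (z := b));
    rewrite ?inE ?eqxx ?orbT //).
  exact: spreads_to_refl.
have := card_lt_sigma_pq K4_sym K4_irr (p := 2) nbhd_le3 q isT.
by rewrite card_ord => /(_ isT); lia.
Qed.

Section Necklace.
Variable n : nat.
Local Notation k := n.+1.
Local Notation V := ('I_k * 'I_4)%type.
Local Notation e := (necklace_rel k).
Local Notation a i := (i, @Ordinal 4 0 isT).
Local Notation b i := (i, @Ordinal 4 1 isT).
Local Notation c i := (i, @Ordinal 4 2 isT).
Local Notation d i := (i, @Ordinal 4 3 isT).

Lemma necklace_sym : symmetric e.
Proof.
move=> [i s] [j t]; rewrite /necklace_rel (eq_sym j) (eq_sym t).
rewrite [orb (_ && (_ == _.+1 %% k)) _]orbC.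
by rewrite (andbC (val s <= 1)) (andbC (val s == 1)) (andbC (val s == 0)).
Qed.

Lemma necklace_irr : irreflexive e.
Proof. by move=> [i [[|[|[|[|s]]]] ?]]; rewrite /necklace_rel eqxx. Qed.

Lemma necklace_nbhd_le3 v : #|nbhd e v| <= 3.
Proof.
have card3 (x y z : V) : #|[set x; y; z]| <= 3.
  by rewrite -setUA !cardsU1 cards1; case: (x \notin _); case: (y \notin _).
have ordS_eq (i j : 'I_k) : (val j == (val i).+1 %% k) = (j == ordS i) by [].
case: v => i [[|[|[|[|t]]]] t4] //; [
  apply: leq_trans (card3 (c i) (d i) (b (ordS i))) |
  apply: leq_trans (card3 (c i) (d i) (a (ord_pred i))) |
  apply: leq_trans (card3 (a i) (b i) (d i)) |
  apply: leq_trans (card3 (a i) (b i) (c i))];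
apply/subset_leq_card/subsetP => -[j [[|[|[|[|s]]]] ?]] //;
rewrite !inE /necklace_rel /= ?ordS_eq ?andbT ?andbF ?orbF //;
by move/eqP=> ->; rewrite ?ordSK !xpair_eqE !eqxx ?orbT.
Qed.

Lemma necklace_rel_diamond i (s t : 'I_4) :
  s != t -> (1 < s) || (1 < t) -> e (i, s) (i, t).
Proof. by move=> st st_gt1; rewrite /necklace_rel eqxx st negb_and -!ltnNge st_gt1. Qed.

Lemma necklace_rel_link i : e (b (ordS i)) (a i).
Proof. by rewrite /necklace_rel !eqxx !orbT. Qed.

Section Spread.
Variables (q : nat) (S B : {set V}) (i : 'I_k).
Hypothesis q_ge2 : 2 <= q.

Lemma diamond_spread : b i \in B -> c i \in B -> spreads_to e q S B ->
  spreads_to e q S (a i |: (d i |: B)).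
Proof.
move=> biB ciB spB.
apply: (spreads_to_setU1 necklace_nbhd_le3 q_ge2 (y := c i) (y' := d i) (z := b i));
  rewrite ?inE ?pair_neq2 ?eqxx ?biB ?ciB ?orbT ?necklace_rel_diamond //.
apply: (spreads_to_setU1 necklace_nbhd_le3 q_ge2 (y := c i) (y' := b i) (z := b i));
  rewrite ?inE ?pair_neq2 ?eqxx ?biB ?ciB ?orbT ?necklace_rel_diamond //.
Qed.

Lemma link_spread : a i \in B -> c i \in B -> c (ordS i) \in B ->
  spreads_to e q S B -> spreads_to e q S (b (ordS i) |: B).
Proof.
move=> aiB ciB ci'B spB.
apply: (spreads_to_setU1 necklace_nbhd_le3 q_ge2
  (y := a i) (y' := c (ordS i)) (z := c i));
  rewrite ?inE ?pair_neq2 ?eqxx ?orbT ?necklace_rel_link ?necklace_rel_diamond //.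
Qed.

End Spread.

Lemma diamond_in (X : {set V}) i : a i \in X -> b i \in X -> c i \in X -> d i \in X ->
  forall s, (i, s) \in X.
Proof. by move=> aX bX cX dX [[|[|[|[|s]]]] s4] //; rewrite (bool_irrelevance s4 isT). Qed.

Definition necklace_seed : {set V} := b ord0 |: [set c i | i : 'I_k].

Lemma necklace_seed_c i : c i \in necklace_seed.
Proof. by rewrite in_setU1 imset_f ?orbT. Qed.

Lemma card_necklace_seed : #|necklace_seed| <= k.+1.
Proof.
rewrite cardsU1 -[k.+1]add1n; apply: leq_add; first exact: leq_b1.
by apply: leq_trans (leq_imset_card _ _) _; rewrite card_ord.
Qed.

Definition diamonds_upto m : {set V} := [set x | val x.1 <= m].

Section Chain.
Variable q : nat.
Hypothesis q_ge2 : 2 <= q.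

Lemma spreads_to_diamonds m : m < k ->
  spreads_to e q necklace_seed (necklace_seed :|: diamonds_upto m).
Proof.
elim: m => [_|m IHm m_lt].
  have sp0 := diamond_spread (i := ord0) q_ge2 (setU11 _ _) (necklace_seed_c _)
    (spreads_to_refl e q necklace_seed).
  apply: spreads_toS sp0; apply/subsetP => -[i s] /setUP[seed_x|].
    by do 2 apply: setU1r.
  rewrite inE /= leqn0 => /eqP i0; have -> : i = ord0 by apply: val_inj.
  move: s; apply: diamond_in;
    by do ?[exact: setU11 | exact: necklace_seed_c | apply: setU1r].
pose j : 'I_k := Ordinal (ltnW m_lt); pose j' := ordS j.
have j'E : val j' = m.+1 by rewrite /= modn_small.
have upto_m s : (j, s) \in necklace_seed :|: diamonds_upto m.
  by apply/setUP; right; rewrite inE /=.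
have seed_c' : c j' \in necklace_seed :|: diamonds_upto m.
  by apply/setUP; left; apply: necklace_seed_c.
have sp_b := link_spread q_ge2 (upto_m _) (upto_m _) seed_c' (IHm (ltnW m_lt)).
have sp_ad := diamond_spread q_ge2 (setU11 _ _) (setU1r _ seed_c') sp_b.
apply: spreads_toS sp_ad; apply/subsetP => -[i s] x_in.
have [->|i_j'] := eqVneq i j'.
  by move: s {x_in}; apply: diamond_in; do ?[exact: setU11 | apply: setU1r].
do 3 apply: setU1r; apply/setUP; case/setUP: x_in => [|x_upto]; [by left|right].
move: x_upto; rewrite !inE /= leq_eqVlt ltnS => /orP[/eqP iE|//].
by case/eqP: i_j'; apply: val_inj; rewrite j'E.
Qed.

Lemma necklace_seed_spreading : pq_spreading e 2 q necklace_seed.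
Proof.
apply: spreads_to_setT; apply: spreads_toS (spreads_to_diamonds (ltnSn n)).
by apply/subsetP => x _; apply/setUP; right; rewrite inE -ltnS ltn_ord.
Qed.

End Chain.

Lemma sigma_necklace q : 2 <= q -> sigma_pq e 2 q = k.+1.
Proof.
move=> q_ge2; apply/eqP; rewrite eqn_leq; apply/andP; split.
  exact: leq_trans (sigma_pq_le (necklace_seed_spreading q_ge2)) card_necklace_seed.
have := card_lt_sigma_pq necklace_sym necklace_irr (p := 2) necklace_nbhd_le3 q isT.
by rewrite card_prod !card_ord => /(_ isT); lia.
Qed.

End Necklace.

Theorem proposition4p6 :
  sigma_pq K4_rel 2 2 = sigma_pq K4_rel 2 3 /\
  (forall k : nat, 2 <= k ->
     sigma_pq (necklace_rel k) 2 2 = sigma_pq (necklace_rel k) 2 3).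
Proof.
split; first by rewrite !sigma_K4.
by case=> // n _; rewrite !sigma_necklace.
Qed.
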